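(* Let $\mathcal{H}$ be a real Hilbert space and $\mathsf{T}:\mathcal{H}\to2^{\mathcal{H}}$ a set-valued operator. The following are equivalent: (1) $\mathsf{T}=\partial\psi$ for some $\psi\in\Gamma_0(\mathcal{H})$; (2) $\mathsf{T}=\mathbf{Prox}_{\phi}$ for some $\phi:\mathcal{H}\to(-\infty,+\infty]$ with $\phi+\tfrac12\|\cdot\|^2\in\Gamma_0(\mathcal{H})$. Moreover, if these statements hold, then $\phi=\psi^*-\tfrac12\|\cdot\|^2$ (equivalently, $\psi=(\phi+\tfrac12\|\cdot\|^2)^*$).
   Context: $\Gamma_0(\mathcal{H})$ is the set of proper lower semicontinuous convex functions $\mathcal{H}\to(-\infty,+\infty]$. $\partial$ denotes the subdifferential $\partial g(x)=\{z:\langle y-x,z\rangle+g(x)\le g(y)\ \forall y\}$; $\psi^*$ is the Fenchel conjugate $\psi^*(u)=\sup_x(\langle x,u\rangle-\psi(x))$. For proper $\phi$, $\mathbf{Prox}_{\phi}(x)=\operatorname{argmin}_{y}\big(\phi(y)+\frac12\|x-y\|^2\big)$ (set-valued). *)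

From HB Require Import structures.
From mathcomp Require Import all_boot all_order all_algebra.
From mathcomp Require Import all_classical all_reals all_analysis.
Set Implicit Arguments. Unset Strict Implicit. Unset Printing Implicit Defensive.
Import Order.TTheory GRing.Theory Num.Theory.
Import numFieldNormedType.Exports.
Local Open Scope classical_set_scope.
Local Open Scope ring_scope.

Section ConvexAnalysis.
Context {R : realType} {H : normedModType R}.

(* [ip] is a (real) inner product on H inducing the norm of H.
   Together with completeness of H this makes H a real Hilbert space. *)
Definition is_inner_product (ip : H -> H -> R) : Prop :=
  [/\ (forall x y, ip x y = ip y x),
      (forall (a : R) (x y z : H), ip (a *: x + y) z = a * ip x z + ip y z)
    & (forall x, `|x| ^+ 2 = ip x x)].

Local Open Scope ereal_scope.

Definition proper_fun (f : H -> \bar R) : Prop :=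
  (forall x, f x != -oo) /\ (exists x, f x \is a fin_num).

(* convexity of an extended-real valued function never equal to -oo *)
Definition convex_fun (f : H -> \bar R) : Prop :=
  forall (x y : H) (t : R), (0 < t < 1)%R ->
    f (t *: x + (1 - t) *: y)%R <= t%:E * f x + (1 - t)%:E * f y.

Definition Gamma0 (f : H -> \bar R) : Prop :=
  [/\ proper_fun f, convex_fun f & lower_semicontinuous f].

Definition subdiff (ip : H -> H -> R) (g : H -> \bar R) (x : H) : set H :=
  [set z | forall y, (ip (y - x)%R z)%:E + g x <= g y].

Definition fconj (ip : H -> H -> R) (psi : H -> \bar R) (u : H) : \bar R :=
  ereal_sup (range (fun x => (ip x u)%:E - psi x)).

Definition halfsq (x : H) : \bar R := (2^-1 * `|x| ^+ 2)%R%:E.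

Definition Prox (phi : H -> \bar R) (x : H) : set H :=
  [set y | forall z, phi y + halfsq (x - y)%R <= phi z + halfsq (x - z)%R].

End ConvexAnalysis.

From HB Require Import structures.
From mathcomp Require Import all_boot all_order all_algebra.
From mathcomp Require Import all_classical all_reals all_analysis.
From mathcomp Require Import ring lra.
Import Order.TTheory GRing.Theory Num.Theory.
Import numFieldNormedType.Exports.
Local Open Scope classical_set_scope.
Local Open Scope ring_scope.

(* Conjugate duality exchanges the two descriptions.  Expanding the squares, [y]
   minimises [phi + |x - .|^2/2] iff [x] is a subgradient of [f := phi + |.|^2/2]
   at [y]; for [f] in Gamma_0 the Fenchel-Young equality and [f^** = f] make this
   equivalent to [y] being a subgradient of [f^*] at [x].  So [Prox phi] is the
   subdifferential of [f^*], and the subdifferential of [psi] is the proximal map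
   of [psi^* - |.|^2/2].  The Fenchel-Moreau theorem [f^** = f] rests on
   separating a point strictly below the epigraph of [f] from it by an affine
   minorant; the separating hyperplane is normal to the metric projection onto
   the epigraph in [H x R], which exists by completeness of [H] and the
   parallelogram law. *)

Section InnerProduct.
Context {R : realType} {H : normedModType R} {ip : H -> H -> R}.
Hypothesis hip : is_inner_product ip.

Lemma ipC x y : ip x y = ip y x. Proof. by case: hip. Qed.

Lemma ipxx x : ip x x = `|x| ^+ 2. Proof. by case: hip. Qed.

Lemma ipDl x y z : ip (x + y) z = ip x z + ip y z.
Proof. by case: hip => _ lin _; rewrite -[x in LHS]scale1r lin mul1r. Qed.

Lemma ip0l z : ip 0 z = 0.
Proof. by have := ipDl 0 0 z; rewrite addr0; lra. Qed.

Lemma ipZl a x z : ip (a *: x) z = a * ip x z.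
Proof. by case: hip => _ lin _; rewrite -[a *: x]addr0 lin ip0l addr0. Qed.

Lemma ipNl x z : ip (- x) z = - ip x z.
Proof. by rewrite -scaleN1r ipZl mulN1r. Qed.

Lemma ipBl x y z : ip (x - y) z = ip x z - ip y z.
Proof. by rewrite ipDl ipNl. Qed.

Lemma ipDr x y z : ip z (x + y) = ip z x + ip z y.
Proof. by rewrite ipC ipDl !(ipC z). Qed.

Lemma ipZr a x z : ip z (a *: x) = a * ip z x.
Proof. by rewrite ipC ipZl ipC. Qed.

Lemma ipBr x y z : ip z (x - y) = ip z x - ip z y.
Proof. by rewrite ipC ipBl !(ipC z). Qed.

Lemma ip0r z : ip z 0 = 0.
Proof. by rewrite ipC ip0l. Qed.

Lemma normD2 x y : `|x + y| ^+ 2 = `|x| ^+ 2 + 2 * ip x y + `|y| ^+ 2.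
Proof. by rewrite -!ipxx ipDl !ipDr (ipC y x); ring. Qed.

Lemma normB2 x y : `|x - y| ^+ 2 = `|x| ^+ 2 - 2 * ip x y + `|y| ^+ 2.
Proof. by rewrite -!ipxx ipBl !ipBr (ipC y x); ring. Qed.

Lemma parallelogram (x y : H) : `|x - y| ^+ 2 + `|x + y| ^+ 2 = 2 * `|x| ^+ 2 + 2 * `|y| ^+ 2.
Proof. by rewrite normB2 normD2; ring. Qed.

Lemma cauchy_schwarz x y : `|ip x y| <= `|x| * `|y|.
Proof.
have [->|x0] := eqVneq x 0; first by rewrite ip0l !normr0 mul0r.
have nx : 0 < `|x| ^+ 2 by rewrite exprn_gt0 // normr_gt0.
rewrite -(ler_pXn2r (isT : (0 < 2)%N)) ?nnegrE ?mulr_ge0 //.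
rewrite real_normK ?num_real // exprMn mulrC -ler_pdivrMr //.
pose t := - ip x y / `|x| ^+ 2.
have : `|t *: x + y| ^+ 2 = `|y| ^+ 2 - ip x y ^+ 2 / `|x| ^+ 2.
  rewrite normD2 normrZ ipZl exprMn real_normK ?num_real // /t.
  by field; rewrite normr_eq0.
by move=> e; rewrite -subr_ge0 -e exprn_ge0.
Qed.

End InnerProduct.

Lemma le0_of_le_quadratic {R : realFieldType} {G K : R} :
  (forall t, 0 < t < 1 -> t * G <= t ^+ 2 * K) -> G <= 0.
Proof.
move=> hG; rewrite leNgt; apply/negP => G0.
have q0 : 0 < G + `|K| + 1 by rewrite -addrA ltr_wpDr // ltr_wpDl.
pose t := G / (G + `|K| + 1).
have t0 : 0 < t by rewrite divr_gt0.
have tq : t ^+ 2 * (G + `|K| + 1) = t * G by rewrite expr2 -mulrA mulfVK // gt_eqF.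
have t1 : t < 1 by rewrite ltr_pdivrMr // mul1r -addrA ltr_pwDr // ltr_wpDl.
have := hG t; rewrite t0 t1 => /(_ isT) htG.
have hK : t ^+ 2 * K <= t ^+ 2 * `|K| by rewrite ler_wpM2l ?exprn_ge0 ?ler_norm // ltW.
have htG1 : 0 < t ^+ 2 * (G + 1) by rewrite mulr_gt0 ?exprn_gt0 // addr_gt0.
lra.
Qed.

Lemma cvgn_sqr_dist_bound {R : realType} {V : completeNormedModType R} {u : V ^nat} {g : R ^nat} :
  g @ \oo --> 0 -> (forall n m, `|u n - u m| ^+ 2 <= g n + g m) -> cvgn u.
Proof.
move=> g0 ug; apply/cauchy_cvgP; apply: cauchy_exP => e e0.
have e2 : 0 < e ^+ 2 / 2 by rewrite divr_gt0 ?exprn_gt0.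
have [N _ gN] := cvgr_dist_lt _ _ g0 _ e2.
exists (u N), N => // n /= Nn; rewrite -ball_normE /=.
rewrite -(ltr_pXn2r (isT : (0 < 2)%N)) ?nnegrE ?(ltW e0) //.
have := gN N (leqnn N); have := gN n Nn; rewrite !sub0r !normrN.
have := ug N n; have := ler_norm (g N); have := ler_norm (g n); lra.
Qed.

Lemma lower_semicontinuous_cvg_le {R : realType} {X : topologicalType} {f : X -> \bar R}
    {xs : X ^nat} {ss : R ^nat} {x : X} {s : R} :
  lower_semicontinuous f -> xs @ \oo --> x -> ss @ \oo --> s ->
  (forall n, (f (xs n) <= (ss n)%:E)%E) -> (f x <= s%:E)%E.
Proof.
move=> flsc xsx sss fss; rewrite leNgt; apply/negP => fxs.
have [a [sa af]] : exists a, s < a /\ (a%:E < f x)%E.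
  case: (f x) fxs => [r| |] // fxs; last by exists (s + 1); rewrite ltry ltrDl.
  by rewrite lte_fin in fxs; exists ((s + r) / 2); rewrite lte_fin; split; lra.
have [V Vx Va] := flsc x a af.
have Vxs : \forall n \near \oo, V (xs n) := xsx V Vx.
have [n [Vxn ssn]] := filter_ex (filterI Vxs (cvgr_lt s sss a sa)).
by have := lt_le_trans (Va _ Vxn) (fss n); rewrite lte_fin ltNge (ltW ssn).
Qed.

Lemma convex_fun_epigraph {R : realType} {H : normedModType R} {f : H -> \bar R}
    {x y : H} {s r t : R} :
  convex_fun f -> 0 < t < 1 -> (f x <= s%:E)%E -> (f y <= r%:E)%E ->
  (f (t *: x + (1 - t) *: y)%R <= (t * s + (1 - t) * r)%:E)%E.
Proof.
move=> fconv /andP[t0 t1] fxs fyr; apply: le_trans (fconv _ _ _ _) _; first by rewrite t0.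
by rewrite (EFinD (t * s)) !EFinM leeD // lee_wpmul2l // lee_fin ?subr_ge0 ltW.
Qed.

Section EpigraphProjection.
Context {R : realType} {H : completeNormedModType R} {ip : H -> H -> R}.
Hypothesis hip : is_inner_product ip.
Context {f : H -> \bar R}.
Hypothesis f_Gamma0 : Gamma0 f.
Variables (x0 : H) (a0 : R).

Let epi x s := (f x <= s%:E)%E.
Let dist2 x s := `|x0 - x| ^+ 2 + (s - a0) ^+ 2.
Let dist2_epi := [set r | exists x s, epi x s /\ r = dist2 x s].
Let d := inf dist2_epi.

Let inf_dist2_le x s : epi x s -> d <= dist2 x s.
Proof.
move=> xs; apply: ge_inf; last by exists x, s.
by exists 0 => _ [y [r [_ ->]]]; rewrite addr_ge0 ?sqr_ge0.
Qed.

Let inf_dist2_adherent n : exists p : H * R, epi p.1 p.2 /\ dist2 p.1 p.2 < d + harmonic n.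
Proof.
have [[_ [x1 fx1]] _ _] := f_Gamma0.
have dist2_epi0 : dist2_epi !=set0.
  by exists (dist2 x1 (fine (f x1))), x1, (fine (f x1)); rewrite /epi fineK.
have dist2_epi_lb : has_lbound dist2_epi.
  by exists 0 => _ [y [r [_ ->]]]; rewrite addr_ge0 ?sqr_ge0.
have [_ [x [s [xs ->]]] lt] := inf_adherent (harmonic_gt0 n) (conj dist2_epi0 dist2_epi_lb).
by exists (x, s).
Qed.

Let epi_parallelogram x s y r : epi x s -> epi y r ->
  `|x - y| ^+ 2 + (s - r) ^+ 2 <= 2 * (dist2 x s - d) + 2 * (dist2 y r - d).
Proof.
move=> xs yr; have [_ fconv _] := f_Gamma0.
have half01 : 0 < (2^-1 : R) < 1 by rewrite invr_gt0 invf_lt1 ?ltr1n ?ltr0n.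
have := inf_dist2_le _ _ (convex_fun_epigraph fconv half01 xs yr).
have -> : 1 - 2^-1 = 2^-1 :> R by field.
have mid : x0 - x + (x0 - y) = 2 *: (x0 - (2^-1 *: x + 2^-1 *: y)).
  rewrite scalerBr scalerDr !scalerA mulfV ?pnatr_eq0 // !scale1r scaler_nat mulr2n.
  by rewrite opprD addrACA.
have := parallelogram hip (x0 - x) (x0 - y).
have diff : x0 - x - (x0 - y) = - (x - y) by rewrite opprB addrC addrA subrK opprB.
rewrite diff normrN mid normrZ exprMn ger0_norm ?ler0n // /dist2.
have -> : (s - r) ^+ 2 =
    2 * (s - a0) ^+ 2 + 2 * (r - a0) ^+ 2 - 4 * (2^-1 * s + 2^-1 * r - a0) ^+ 2 by field.
lra.
Qed.

Let projection_exists : exists2 p : H * R, epi p.1 p.2 & dist2 p.1 p.2 = d.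
Proof.
have [e he] := choice inf_dist2_adherent.
pose xs n := (e n).1; pose ss n := (e n).2; pose gap n := dist2 (xs n) (ss n) - d.
have gap_cvg : gap @ \oo --> 0.
  apply: (squeeze_cvgr _ (cvg_cst 0) (@cvg_harmonic R)); apply: nearW => n.
  by have [/inf_dist2_le dn /= lt] := he n; rewrite /gap /xs /ss subr_ge0 dn lerBlDl ltW.
have gap2_cvg : (fun n => 2 * gap n) @ \oo --> 0.
  by rewrite -(mulr0 2); apply: cvgM gap_cvg; exact: cvg_cst.
have bound n m : `|xs n - xs m| ^+ 2 + (ss n - ss m) ^+ 2 <= 2 * gap n + 2 * gap m.
  by have [? _] := he n; have [? _] := he m; exact: epi_parallelogram.
have xs_cvg : cvgn xs.
  apply: (cvgn_sqr_dist_bound gap2_cvg) => n m.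
  by have := bound n m; have := sqr_ge0 (ss n - ss m); lra.
have ss_cvg : cvgn ss.
  apply: (cvgn_sqr_dist_bound gap2_cvg) => n m.
  by have := bound n m; rewrite real_normK ?num_real //; have := sqr_ge0 `|xs n - xs m|; lra.
exists (limn xs, limn ss) => /=.
  have [_ _ flsc] := f_Gamma0.
  by apply: lower_semicontinuous_cvg_le flsc xs_cvg ss_cvg _ => n; have [] := he n.
have dist2_cvg : (fun n => dist2 (xs n) (ss n)) @ \oo --> dist2 (limn xs) (limn ss).
  have xs_dist : `|x0 - xs n| @[n --> \oo] --> `|x0 - limn xs|.
    by apply: cvg_norm; apply: cvgB => //; exact: cvg_cst.
  have ss_dist : ss n - a0 @[n --> \oo] --> limn ss - a0.
    by apply: cvgB => //; exact: cvg_cst.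
  by apply: cvgD; apply: cvgM.
have dist2_cvg_d : (fun n => dist2 (xs n) (ss n)) @ \oo --> d.
  have -> : (fun n => dist2 (xs n) (ss n)) = (fun n => gap n + d).
    by apply/funext => n; rewrite /gap subrK.
  by rewrite -[X in _ --> X]add0r; apply: cvgD => //; exact: cvg_cst.
exact: (cvg_unique _ dist2_cvg dist2_cvg_d).
Qed.

(* Minimality of [dist2] on the segment from [(xq, sq)] towards [(x, s)]. *)
Let projection_variational xq sq : epi xq sq -> dist2 xq sq = d ->
  forall x s, epi x s -> ip (x0 - xq) (x - xq) <= (sq - a0) * (s - sq).
Proof.
move=> epiq Dq x s xs; have [_ fconv _] := f_Gamma0.
suff : 2 * (ip (x0 - xq) (x - xq) - (sq - a0) * (s - sq)) <= 0 by lra.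
apply: (le0_of_le_quadratic (K := `|x - xq| ^+ 2 + (s - sq) ^+ 2)) => t t01.
have /andP[t0 _] := t01.
have := inf_dist2_le _ _ (convex_fun_epigraph fconv t01 xs epiq); rewrite -Dq /dist2.
have -> : x0 - (t *: x + (1 - t) *: xq) = (x0 - xq) - t *: (x - xq).
  rewrite scalerBl scale1r scalerBr opprB opprD opprB !addrA addrAC [RHS]addrAC.
  by congr (_ + _); exact: addrAC.
rewrite (normB2 hip (x0 - xq)) normrZ (ipZr hip) exprMn ger0_norm ?(ltW t0) //.
have -> : t * s + (1 - t) * sq - a0 = (sq - a0) + t * (s - sq) by ring.
move: (ip (x0 - xq) (x - xq)) (`|x0 - xq|) (`|x - xq|) (sq - a0) (s - sq) => I a b c g.
nra.
Qed.

Lemma epigraph_projection : exists xq sq, (f xq <= sq%:E)%E /\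
  forall x s, (f x <= s%:E)%E -> ip (x0 - xq) (x - xq) <= (sq - a0) * (s - sq).
Proof.
have [[xq sq] /= epiq Dq] := projection_exists.
by exists xq, sq; split => //; exact: projection_variational.
Qed.

End EpigraphProjection.

Definition affine_minorant {R : realType} {H : normedModType R} (ip : H -> H -> R)
    (f : H -> \bar R) (u : H) (b : R) :=
  forall x, ((ip x u + b)%:E <= f x)%E.

Section ProjectionSeparation.
Context {R : realType} {H : normedModType R} {ip : H -> H -> R}.
Hypothesis hip : is_inner_product ip.
Context {f : H -> \bar R} {x0 xq : H} {a0 sq : R}.
Hypothesis f_neqNy : forall x, (f x != -oo)%E.
Hypothesis epi_q : (f xq <= sq%:E)%E.
Hypothesis normal_cone : forall x s, (f x <= s%:E)%E ->
  ip (x0 - xq) (x - xq) <= (sq - a0) * (s - sq).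

Lemma projection_level_ge : a0 <= sq.
Proof.
have := normal_cone xq (sq + 1); rewrite subrr (ip0r hip) addrAC subrr add0r mulr1.
by rewrite subr_ge0; apply; apply: le_trans epi_q _; rewrite lee_fin lerDl.
Qed.

Lemma nonvertical_separation : a0 < sq ->
  exists u b, affine_minorant ip f u b /\ a0 < ip x0 u + b.
Proof.
(* The graph of the hyperplane through [(xq, sq)] with normal [(x0 - xq, a0 - sq)]. *)
rewrite -subr_gt0; set c := sq - a0 => c0.
pose u := c^-1 *: (x0 - xq).
have uE y : ip y u + (sq - ip xq u) = c^-1 * ip (x0 - xq) (y - xq) + sq.
  by rewrite /u (ipC hip (x0 - xq)) -(ipZr hip) (ipBl hip); ring.
exists u, (sq - ip xq u); split.
- move=> x; case fx: (f x) (f_neqNy x) => [r| |] // _; last exact: leey.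
  have := normal_cone x r; rewrite fx lee_fin lexx => /(_ isT) cone_x.
  by rewrite lee_fin uE -lerBrDr -(ler_pM2l c0) mulrA mulfV ?gt_eqF // mul1r.
- have ci0 : 0 < c^-1 by rewrite invr_gt0.
  rewrite uE (ipxx hip); have := mulr_ge0 (ltW ci0) (sqr_ge0 `|x0 - xq|).
  by move: c0; rewrite /c; lra.
Qed.

End ProjectionSeparation.

Section AffineMinorant.
Context {R : realType} {H : completeNormedModType R} {ip : H -> H -> R}.
Hypothesis hip : is_inner_product ip.
Context {f : H -> \bar R}.
Hypothesis f_Gamma0 : Gamma0 f.

Let separation_finite x0 a0 : (a0%:E < f x0)%E -> f x0 \is a fin_num ->
  exists u b, affine_minorant ip f u b /\ a0 < ip x0 u + b.
Proof.
move=> a0f fx0; have [[fN _] _ _] := f_Gamma0.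
have [xq [sq [epi_q cone]]] := epigraph_projection hip f_Gamma0 x0 a0.
apply: (nonvertical_separation hip fN cone).
rewrite lt_def (projection_level_ge hip epi_q cone) andbT; apply/eqP => sq_a0.
have := cone x0 (fine (f x0)); rewrite fineK // lexx sq_a0 subrr mul0r (ipxx hip).
move=> /(_ isT) x0q0; have x0q : x0 = xq.
  by apply/eqP; rewrite -subr_eq0 -normr_eq0 -sqrf_eq0 eq_le x0q0 sqr_ge0.
by move: epi_q; rewrite -x0q sq_a0 leNgt a0f.
Qed.

Lemma affine_minorant_separation x0 a0 : (a0%:E < f x0)%E ->
  exists u b, affine_minorant ip f u b /\ a0 < ip x0 u + b.
Proof.
move=> a0f; have [[fN [x1 fx1]] _ _] := f_Gamma0.
case fx0: (f x0) a0f (fN x0) => [r| |] // a0f _; first by apply: separation_finite; rewrite fx0.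
have [xq [sq [epi_q cone]]] := epigraph_projection hip f_Gamma0 x0 a0.
have := projection_level_ge hip epi_q cone; rewrite le_eqVlt => /orP[/eqP sq_a0|]; last first.
  exact: (nonvertical_separation hip fN cone).
(* A horizontal normal [x0 - xq] separates [x0] from [dom f]: tilting any affine
   minorant along it raises its value at [x0] as much as needed. *)
have x1_above : ((fine (f x1) - 1)%:E < f x1)%E by rewrite -{2}(fineK fx1) lte_fin gtrBl.
have [u1 [b1 [minor1 _]]] := separation_finite _ _ x1_above fx1.
set v := x0 - xq.
have v0 : 0 < `|v| ^+ 2.
  rewrite exprn_gt0 // normr_gt0 subr_eq0; apply/eqP => x0q.
  by move: epi_q; rewrite -x0q fx0.
have dom_normal x r : f x = r%:E -> ip v (x - xq) <= 0.
  by move=> fx; have := cone x r; rewrite fx lexx -sq_a0 subrr mul0r; exact.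
pose lam := (`|a0 - ip x0 u1 - b1| + 1) / `|v| ^+ 2.
have lam0 : 0 <= lam by rewrite divr_ge0 // ?addr_ge0 // ltW.
exists (u1 + lam *: v), (b1 - lam * ip xq v); split.
- move=> x; case fx: (f x) (fN x) => [r| |] // _; last exact: leey.
  have := minor1 x; rewrite fx lee_fin => minor1x.
  have := mulr_ge0_le0 lam0 (dom_normal x r fx).
  rewrite lee_fin (ipDr hip) (ipZr hip) (ipC hip v) (ipBl hip) mulrBr; lra.
- have lam_v : lam * ip x0 v - lam * ip xq v = `|a0 - ip x0 u1 - b1| + 1.
    by rewrite -mulrBr -(ipBl hip) (ipxx hip) /lam divfK // gt_eqF.
  rewrite (ipDr hip) (ipZr hip); have := ler_norm (a0 - ip x0 u1 - b1); lra.
Qed.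

End AffineMinorant.

Section Conjugate.
Context {R : realType} {H : normedModType R}.
Variable ip : H -> H -> R.
Local Open Scope ereal_scope.

Lemma fenchel_young (f : H -> \bar R) x u : (ip x u)%:E - f x <= fconj ip f u.
Proof. by apply: ereal_sup_ubound; exists x. Qed.

Lemma fconj_le (f : H -> \bar R) u b :
  (forall x, (ip x u)%:E - f x <= b) -> fconj ip f u <= b.
Proof. by move=> fb; apply/ereal_supP => _ [x _ <-]; exact: fb. Qed.

Lemma fconj_neqNy {f : H -> \bar R} u : proper_fun f -> fconj ip f u != -oo.
Proof.
case=> _ [x1 fx1]; rewrite -ltNye; apply: lt_le_trans (fenchel_young f x1 u).
by rewrite -(fineK fx1) -EFinB ltNyr.
Qed.

Lemma fconj_le_affine {f : H -> \bar R} {u : H} {b : R} :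
  affine_minorant ip f u b -> fconj ip f u <= (- b)%:E.
Proof.
move=> minor; apply: fconj_le => x; have := minor x.
case: (f x) => [r| |] //; last by move=> _; exact: leNye.
by rewrite -EFinB !lee_fin => ?; lra.
Qed.

End Conjugate.

Section ConjugateInnerProduct.
Context {R : realType} {H : normedModType R} {ip : H -> H -> R}.
Hypothesis hip : is_inner_product ip.
Local Open Scope ereal_scope.

Lemma fconj_convex (f : H -> \bar R) : proper_fun f -> convex_fun (fconj ip f).
Proof.
move=> pf u v t /andP[t0 t1]; have t1' : (0 < 1 - t)%R by rewrite subr_gt0.
case fu: (fconj ip f u) (fconj_neqNy ip u pf) => [a| |] // _;
case fv: (fconj ip f v) (fconj_neqNy ip v pf) => [b| |] // _; last first.
- by rewrite !gt0_muley ?lte_fin //; exact: leey.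
- by rewrite gt0_muley ?lte_fin // addye // leey.
- by rewrite gt0_muley ?lte_fin // addey // leey.
rewrite -!EFinM -EFinD; apply: fconj_le => x.
have := fenchel_young ip f x u; have := fenchel_young ip f x v; rewrite fu fv.
case: (f x) (pf.1 x) => [r| |] // _; last by move=> *; exact: leNye.
rewrite -!EFinB !lee_fin (ipDr hip) !(ipZr hip) => xv xu.
have := ler_wpM2l (ltW t0) xu; have := ler_wpM2l (ltW t1') xv; lra.
Qed.

Lemma fconj_lsc (f : H -> \bar R) : proper_fun f -> lower_semicontinuous (fconj ip f).
Proof.
move=> pf u0 a /ereal_sup_gtP [_ [x _ <-]].
case fx: (f x) (pf.1 x) => [r| |] //= _.
rewrite -EFinB lte_fin => ha; pose e := (ip x u0 - r - a)%R.
have e0 : (0 < e)%R by rewrite /e; lra.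
have n0 : (0 < `|x| + 1)%R by rewrite ltr_wpDl.
exists (ball u0 (e / (`|x| + 1))%R); first by apply: nbhsx_ballx; rewrite divr_gt0.
move=> u; rewrite -ball_normE /= distrC ltr_pdivlMr // => hu.
apply: lt_le_trans (fenchel_young ip f x u); rewrite fx -EFinB lte_fin.
have xu : (`|x| * `|u - u0| < e)%R by have := normr_ge0 (u - u0)%R; nra.
have := le_lt_trans (cauchy_schwarz hip x (u - u0)%R) xu.
by rewrite ltr_norml (ipBr hip) /e => /andP[? _]; lra.
Qed.

End ConjugateInnerProduct.

Section FenchelMoreau.
Context {R : realType} {H : completeNormedModType R} {ip : H -> H -> R}.
Hypothesis hip : is_inner_product ip.
Local Open Scope ereal_scope.

Lemma fconj_Gamma0 (f : H -> \bar R) : Gamma0 f -> Gamma0 (fconj ip f).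
Proof.
move=> gf; have [pf _ _] := gf.
split; [split | exact: fconj_convex | exact: fconj_lsc].
  by move=> u; exact: fconj_neqNy.
have [_ [x1 fx1]] := pf.
have x1_above : (fine (f x1) - 1)%:E < f x1 by rewrite -{2}(fineK fx1) lte_fin gtrBl.
have [u [b [minor _]]] := affine_minorant_separation hip gf _ _ x1_above.
exists u; rewrite fin_numE fconj_neqNy //= -ltey.
exact: le_lt_trans (fconj_le_affine ip minor) (ltry _).
Qed.

Lemma fconjK (f : H -> \bar R) : Gamma0 f -> fconj ip (fconj ip f) = f.
Proof.
move=> gf; have [pf _ _] := gf; have [pcf _ _] := fconj_Gamma0 _ gf.
apply/funext => x; apply/eqP; rewrite eq_le; apply/andP; split.
  apply: fconj_le => u; have := fenchel_young ip f x u.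
  case: (f x) (pf.1 x) => [r| |] // _; last by rewrite leey.
  case: (fconj ip f u) (fconj_neqNy ip u pf) => [s| |] //= _; last by rewrite addeNy leNye.
  by rewrite -!EFinB !lee_fin (ipC hip u x); lra.
rewrite leNgt; apply/negP => ff_lt.
case ffx: (fconj ip (fconj ip f) x) ff_lt (fconj_neqNy ip x pcf) => [s| |] //;
  last by rewrite ltNge leey.
move=> ff_lt _.
have [u [b [minor sb]]] := affine_minorant_separation hip gf _ _ ff_lt.
have := fenchel_young ip (fconj ip f) u x; rewrite ffx.
have := fconj_le_affine ip minor.
case: (fconj ip f u) (fconj_neqNy ip u pf) => [c| |] // _.
by rewrite -EFinB !lee_fin (ipC hip u x); lra.
Qed.

End FenchelMoreau.

Section SubdifferentialProx.
Context {R : realType} {H : normedModType R} {ip : H -> H -> R}.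
Hypothesis hip : is_inner_product ip.
Local Open Scope ereal_scope.

Lemma subdiff_fenchel_young (g : H -> \bar R) x z : proper_fun g ->
  subdiff ip g x z <-> g x \is a fin_num /\ fconj ip g z <= (ip x z)%:E - g x.
Proof.
move=> [gN [y1 gy1]]; split.
  case gx: (g x) (gN x) => [r| |] // _ zx; last by move: gy1 (zx y1); rewrite gx; case: (g y1).
  split => //; apply: fconj_le => y; have := zx y; rewrite gx.
  case: (g y) (gN y) => [s| |] // _; last by move=> _; exact: leNye.
  by rewrite -EFinD -!EFinB !lee_fin (ipBl hip); lra.
case=> + conj_z y; case gx: (g x) conj_z => [r| |] // conj_z _.
have := le_trans (fenchel_young ip g y z) conj_z.
case: (g y) (gN y) => [s| |] // _; last by move=> _; exact: leey.
by rewrite -!EFinB -EFinD !lee_fin (ipBl hip); lra.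
Qed.

Lemma Prox_subdiff (phi : H -> \bar R) x y : (forall z, phi z != -oo) ->
  Prox phi x y <-> subdiff ip (fun z => phi z + halfsq z) y x.
Proof.
move=> phiN; rewrite /Prox /subdiff /halfsq.
split=> yx z; have := yx z;
  case: (phi y) (phiN y) => [a| |] // _; case: (phi z) (phiN z) => [b| |] // _;
  rewrite ?addye ?addey ?leey // -?EFinD ?leye_eq //.
all: by rewrite !lee_fin !(normB2 hip) (ipBl hip) (ipC hip x y) (ipC hip x z); lra.
Qed.

End SubdifferentialProx.

Section ProxSubdiffDuality.
Context {R : realType} {H : completeNormedModType R} {ip : H -> H -> R}.
Hypothesis hip : is_inner_product ip.
Local Open Scope ereal_scope.

Lemma subdiff_fconj (f : H -> \bar R) x y : Gamma0 f ->
  subdiff ip f y x <-> subdiff ip (fconj ip f) x y.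
Proof.
move=> gf; have [pf _ _] := gf; have [pcf _ _] := fconj_Gamma0 hip _ gf.
rewrite (subdiff_fenchel_young hip _ _ _ pf) (subdiff_fenchel_young hip _ _ _ pcf).
rewrite fconjK // (ipC hip x y).
case: (f y) (pf.1 y) => [r| |] // _; case: (fconj ip f x) (fconj_neqNy ip x pf) => [s| |] // _.
- by rewrite -!EFinB !lee_fin; split=> -[_ ?]; split => //; lra.
- by rewrite -EFinB leye_eq; split=> -[].
- by rewrite -EFinB leye_eq; split=> -[].
Qed.

Lemma Prox_subdiff_fconj (phi : H -> \bar R) : (forall x, phi x != -oo) ->
  Gamma0 (fun x => phi x + halfsq x) ->
  Prox phi = subdiff ip (fconj ip (fun x => phi x + halfsq x)).
Proof.
move=> phiN gf; apply/funext => x; apply/funext => y; apply/propext.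
rewrite (Prox_subdiff hip _ _ _ phiN).
exact: subdiff_fconj.
Qed.

Lemma subdiff_Prox_fconj (psi : H -> \bar R) : Gamma0 psi ->
  let phi := fun x => fconj ip psi x - halfsq x in
  [/\ forall x, phi x != -oo, Gamma0 (fun x => phi x + halfsq x) & subdiff ip psi = Prox phi].
Proof.
move=> gpsi phi; have [ppsi _ _] := gpsi.
have phiN x : phi x != -oo.
  by rewrite /phi /halfsq; case: (fconj ip psi x) (fconj_neqNy ip x ppsi).
have phiK : (fun x => phi x + halfsq x) = fconj ip psi.
  by apply/funext => x; rewrite subeK.
have gphi : Gamma0 (fun x => phi x + halfsq x) by rewrite phiK; exact: fconj_Gamma0.
by split => //; rewrite (Prox_subdiff_fconj _ phiN gphi) phiK fconjK.
Qed.

End ProxSubdiffDuality.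

Theorem proposition1 (R : realType) (H : completeNormedModType R)
    (ip : H -> H -> R) (hip : is_inner_product ip) (T : H -> set H) :
  [/\ (exists psi : H -> \bar R, Gamma0 psi /\ T = subdiff ip psi) <->
      (exists phi : H -> \bar R, (forall x, phi x != -oo)%E /\
          Gamma0 (fun x => phi x + halfsq x)%E /\ T = Prox phi),
      (forall psi : H -> \bar R, Gamma0 psi -> T = subdiff ip psi ->
         let phi := (fun x => fconj ip psi x - halfsq x)%E in
         [/\ (forall x, phi x != -oo)%E,
             Gamma0 (fun x => phi x + halfsq x)%E & T = Prox phi])
    & (forall phi : H -> \bar R, (forall x, phi x != -oo)%E ->
         Gamma0 (fun x => phi x + halfsq x)%E -> T = Prox phi ->
         let psi := fconj ip (fun x => phi x + halfsq x)%E in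
         Gamma0 psi /\ T = subdiff ip psi)].
Proof.
split.
- split=> [[psi [gpsi ->]] | [phi [phiN [gphi ->]]]].
  + have [phiN gphi ->] := subdiff_Prox_fconj hip _ gpsi.
    by exists (fun x => fconj ip psi x - halfsq x)%E.
  + exists (fconj ip (fun x => phi x + halfsq x)%E).
    by rewrite -Prox_subdiff_fconj //; split => //; exact: fconj_Gamma0.
- by move=> psi gpsi ->; exact: (subdiff_Prox_fconj hip _ gpsi).
- by move=> phi phiN gphi -> psi; split; [exact: fconj_Gamma0 | exact: Prox_subdiff_fconj].
Qed.
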